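(* Consider the influence-based model $X(t+1)=f_{\mathrm{IbM}}(X(t))$, $f_{\mathrm{IbM}}(X)=\operatorname{diag}(|X|\mathbf{1}_n)^{-1}XX$. Let $Q_{\mathrm{IbM}}$ be the set of matrices $PYP^{\top}\in\mathcal{S}^{+}_{\mathrm{rs\text{-}symm}}$ with $P$ a permutation matrix and $Y$ block diagonal with each diagonal block of the form $\operatorname{sign}(w)w^{\top}$, $w\in\mathbb{R}^m$, $|w|\succ\mathbf{0}_m$, $m\le n$. Then: (i) each element of $Q_{\mathrm{IbM}}$ of rank one is a locally stable fixed point of $f_{\mathrm{IbM}}$; (ii) for every $X(0)\in\mathcal{S}^{+}_{\mathrm{rs\text{-}symm}}$, the following are equivalent: (a) the solution $X(t)$ satisfies the non-vanishing appraisal condition $\liminf_{t\to\infty}\min_{i,j}|X_{ij}(t)|>0$; (b) there exists $t_0\ge0$ such that $G(X(t))$ satisfies social balance for all $t\ge t_0$; (c) there exists $X^*\in Q_{\mathrm{IbM}}$ of rank one such that $\lim_{t\to\infty}X(t)=X^*$.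
   Context: $|X|$ is entry-wise absolute value, $\mathbf{1}_n$ the all-ones vector, $\operatorname{sign}$ entry-wise sign, $\succ$ entry-wise strict inequality. $\mathcal{S}^{+}_{\mathrm{rs\text{-}symm}}=\{X\in\mathbb{R}^{n\times n}:\operatorname{sign}(X)=\operatorname{sign}(X)^{\top},\ X_{ii}>0\ \forall i,\ \exists\gamma\succ\mathbf{0}_n\text{ with }\operatorname{diag}(\gamma)X=(\operatorname{diag}(\gamma)X)^{\top}\}$. A fixed point $X^*$ of a map $f$ is locally stable if for every $\epsilon>0$ there is $\delta>0$ such that $\max_{i,j}|X_{ij}(0)-X^*_{ij}|<\delta$ implies $\max_{i,j}|X_{ij}(t)-X^*_{ij}|<\epsilon$ for all $t\ge0$, where $X(t+1)=f(X(t))$. $G(X)$ is the weighted digraph with adjacency matrix $X$; it satisfies social balance if $X_{ii}>0$ for all $i$ and $\operatorname{sign}(X_{ij})\operatorname{sign}(X_{jk})\operatorname{sign}(X_{ki})=1$ for all $i,j,k$. *)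

From HB Require Import structures.
From mathcomp Require Import all_boot all_order all_algebra all_fingroup.
From mathcomp Require Import all_classical all_reals all_analysis.
Set Implicit Arguments. Unset Strict Implicit. Unset Printing Implicit Defensive.
Import Order.TTheory GRing.Theory Num.Theory.
Import numFieldNormedType.Exports.
Local Open Scope ring_scope.

Section Defs.
Variables (R : realType) (n : nat).
Implicit Types (X : 'M[R]_n).

Definition sgmx X : 'M[R]_n := map_mx Num.sg X.

Definition rs_symm_pos X : Prop :=
  [/\ sgmx X = (sgmx X)^T,
      forall i, 0 < X i i
    & exists gamma : 'I_n -> R, (forall i, 0 < gamma i) /\
        diag_mx (\row_i gamma i) *m X = (diag_mx (\row_i gamma i) *m X)^T].

Definition f_IbM X : 'M[R]_n :=
  invmx (diag_mx (\row_i (\sum_k `|X i k|))) *m (X *m X).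

Definition traj X0 (t : nat) : 'M[R]_n := iter t f_IbM X0.

Definition maxdist (X Y : 'M[R]_n) : R := \big[Num.max/0]_(i < n) \big[Num.max/0]_(j < n) `|X i j - Y i j|.

Definition locally_stable (f : 'M[R]_n -> 'M[R]_n) (Xs : 'M[R]_n) : Prop :=
  forall eps : R, 0 < eps -> exists delta : R, 0 < delta /\
    forall X0 : 'M[R]_n, maxdist X0 Xs < delta ->
      forall t, maxdist (iter t f X0) Xs < eps.

(* Block diagonal Y whose diagonal blocks are sign(w) w^T with |w| > 0:
   the block of index i is given by a nondecreasing label b i, the vectors
   w of the blocks are concatenated into one vector w : 'I_n -> R. *)
Definition blockdiag_sgn_outer (Y : 'M[R]_n) : Prop :=
  exists (b : 'I_n -> nat) (w : 'I_n -> R),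
    {homo b : i j / (i <= j)%N >-> (i <= j)%N} /\
    (forall i, w i != 0) /\
    forall i j, Y i j = if b i == b j then Num.sg (w i) * w j else 0.

Definition Q_IbM X : Prop :=
  rs_symm_pos X /\
  exists (s : 'S_n) (Y : 'M[R]_n),
    blockdiag_sgn_outer Y /\ X = perm_mx s *m Y *m (perm_mx s)^T.

Definition social_balance X : Prop :=
  (forall i, 0 < X i i) /\
  forall i j k, Num.sg (X i j) * Num.sg (X j k) * Num.sg (X k i) = 1.

(* min_{i,j} |X_ij| as an extended real (+oo for the empty min) *)
Definition minabs X : \bar R :=
  \big[Order.min/+oo%E]_(i < n) \big[Order.min/+oo%E]_(j < n) (`|X i j|)%:E.

Definition nonvanishing_appraisal (X : nat -> 'M[R]_n) : Prop :=
  (0 < limn_einf (fun t => minabs (X t)))%E.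

End Defs.

(* For a sign vector s (s i = +-1, S = diag s) and a positive matrix A,
   f_IbM maps S A S to S (D^-1 A A) S with D = diag (A 1): the positive part
   evolves by averaging, each row of the new matrix being a convex combination
   of the rows of A with weights bounded below.  Hence every column range
   shrinks geometrically and the iterates converge to a matrix with equal rows.
   Elements sg(w) w^T of Q_IbM of rank one have exactly this shape with a
   constant positive part, which gives (i); a socially balanced matrix also has
   the shape S A S, which gives (b) -> (c).  For (a) -> (b): while the entries
   stay away from 0, the largest absolute row sum never increases, and an
   unbalanced triangle forces a cancellation in X X that lowers it by a fixed
   amount two steps later, so this can happen only finitely often.  Finally
   sg(w) w^T has no zero entry, so (c) -> (a). *)

From HB Require Import structures.
From mathcomp Require Import all_boot all_order all_algebra all_fingroup.
From mathcomp Require Import all_classical all_reals all_analysis.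
From mathcomp Require Import ring lra.
Import Order.TTheory GRing.Theory Num.Theory.
Import numFieldNormedType.Exports.
Local Open Scope classical_set_scope.
Local Open Scope ring_scope.
Set Implicit Arguments. Unset Strict Implicit. Unset Printing Implicit Defensive.

Lemma invmx_diag (F : fieldType) m (r : 'I_m -> F) :
  (forall i, r i != 0) -> invmx (diag_mx (\row_i r i)) = diag_mx (\row_i (r i)^-1).
Proof.
move=> r_neq0.
have rK : diag_mx (\row_i r i) *m diag_mx (\row_i (r i)^-1) = 1%:M.
  apply/matrixP => i j; rewrite mul_diag_mx !mxE.
  by case: (eqVneq i j) => [->|_]; rewrite ?mulr1n ?mulfV ?mulr0n ?mulr0.
have [r_unit _] := mulmx1_unit rK.
by rewrite -[LHS]mulmx1 -rK mulmxA mulVmx // mul1mx.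
Qed.

Section RealFacts.
Variable F : realFieldType.

Lemma psumr_gt0 (I : finType) (u : I -> F) i :
  (forall k, 0 <= u k) -> 0 < u i -> 0 < \sum_k u k.
Proof.
by move=> u_ge0 ui_gt0; rewrite (bigD1 i) //= ltr_pwDl // sumr_ge0.
Qed.

Lemma sg_sq (x : F) : x != 0 -> Num.sg x * Num.sg x = 1.
Proof. by move=> x_neq0; rewrite -expr2 sqr_sg x_neq0. Qed.

Lemma normr_sq1 (x : F) : x * x = 1 -> `|x| = 1.
Proof.
move=> xx1; have : `|x| * `|x| = 1 by rewrite -normrM xx1 normr1.
by have := normr_ge0 x; move: `|x| => y y_ge0 yy1; nra.
Qed.

Lemma normD_cancel (x y m : F) :
  x * y <= 0 -> m <= `|x| -> m <= `|y| -> `|x + y| + 2 * m <= `|x| + `|y|.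
Proof.
move=> xy_le0 mx my.
suff : `|x + y| <= `|x| + `|y| - 2 * m by lra.
rewrite ler_norml; have [x0|x0] := lerP 0 x; have [y0|y0] := lerP 0 y;
  rewrite ?(ger0_norm x0) ?(ltr0_norm x0) ?(ger0_norm y0) ?(ltr0_norm y0) in mx my *;
  apply/andP; split; nra.
Qed.

Lemma ler_norm_sum_cancel (I : finType) (u : I -> F) a b m :
  a != b -> u a * u b <= 0 -> m <= `|u a| -> m <= `|u b| ->
  `|\sum_k u k| + 2 * m <= \sum_k `|u k|.
Proof.
move=> ab uab ma mb.
have split2 (v : I -> F) : \sum_k v k = v a + v b + \sum_(k | (k != a) && (k != b)) v k.
  by rewrite (bigD1 a) //= (bigD1 b) 1?eq_sym //= addrA.
rewrite split2 [X in _ <= X]split2.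
have := normD_cancel uab ma mb.
have := ler_normD (u a + u b) (\sum_(k | (k != a) && (k != b)) u k).
have : `|\sum_(k | (k != a) && (k != b)) u k| <= \sum_(k | (k != a) && (k != b)) `|u k|.
  exact: ler_norm_sum.
lra.
Qed.

Section WeightedAverage.
Variables (I : finType) (w x : I -> F).
Hypotheses (w_ge0 : forall k, 0 <= w k) (sumw_gt0 : 0 < \sum_k w k).

Lemma wavg_bounds lo hi : (forall k, lo <= x k <= hi) ->
  lo <= (\sum_k w k * x k) / (\sum_k w k) <= hi.
Proof.
move=> x_in; rewrite ler_pdivlMr // ler_pdivrMr // !mulr_sumr.
apply/andP; split; apply: ler_sum => k _; have := w_ge0 k; case/andP: (x_in k); nra.
Qed.

Lemma wavg_le_sub hi k0 : (forall k, x k <= hi) ->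
  (\sum_k w k * x k) / (\sum_k w k) <= hi - w k0 / (\sum_k w k) * (hi - x k0).
Proof.
move=> x_le.
have gap : w k0 * (hi - x k0) <= \sum_k w k * (hi - x k).
  rewrite (bigD1 k0) //= lerDl sumr_ge0 // => k _.
  by rewrite mulr_ge0 // subr_ge0.
have E : \sum_k w k * (hi - x k) = hi * \sum_k w k - \sum_k w k * x k.
  by rewrite mulr_sumr -sumrB; apply: eq_bigr => k _; ring.
rewrite E in gap.
rewrite ler_pdivrMr // mulrBl mulrAC divfK ?gt_eqF //; lra.
Qed.

Lemma wavg_ge_add lo k0 : (forall k, lo <= x k) ->
  lo + w k0 / (\sum_k w k) * (x k0 - lo) <= (\sum_k w k * x k) / (\sum_k w k).
Proof.
move=> x_ge.
have gap : w k0 * (x k0 - lo) <= \sum_k w k * (x k - lo).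
  rewrite (bigD1 k0) //= lerDl sumr_ge0 // => k _.
  by rewrite mulr_ge0 // subr_ge0.
have E : \sum_k w k * (x k - lo) = \sum_k w k * x k - lo * \sum_k w k.
  by rewrite mulr_sumr -sumrB; apply: eq_bigr => k _; ring.
rewrite E in gap.
rewrite ler_pdivlMr // mulrDl mulrAC divfK ?gt_eqF //; lra.
Qed.

End WeightedAverage.
End RealFacts.

Section RealAnalysis.
Variable R : realType.

Lemma sup_nested_intervals (lo hi : nat -> R) :
  nondecreasing_seq lo -> nonincreasing_seq hi -> (forall t, lo t <= hi t) ->
  forall t, lo t <= sup (range lo) <= hi t.
Proof.
move=> lo_nd hi_ni lo_hi.
have lo_le_hi s t : lo s <= hi t.
  apply: le_trans (lo_nd _ _ (leq_maxl s t)) _.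
  exact: le_trans (lo_hi _) (hi_ni _ _ (leq_maxr s t)).
move=> t; apply/andP; split.
  apply: sup_upper_bound; last by exists t.
  by split; [exists (lo 0%N), 0%N | exists (hi 0%N) => _ [s _ <-]].
by apply: ge_sup; [exists (lo 0%N), 0%N | move=> _ [s _ <-]].
Qed.

Lemma geometric_le_eventually (q K e : R) : 0 <= q < 1 -> 0 <= K -> 0 < e ->
  exists N, forall t, (N <= t)%N -> q ^+ t * K <= e.
Proof.
move=> /andP[q_ge0 q_lt1] K_ge0 e_gt0.
have e'_gt0 : 0 < e / (K + 1) by rewrite divr_gt0 // ltr_wpDl.
have q_norm : `|q| < 1 by rewrite ger0_norm.
have [N _ HN] := (cvgrPdist_lt _ _).1 (cvg_expr q_norm) _ e'_gt0.
exists N => t /HN /=; rewrite sub0r normrN ger0_norm ?exprn_ge0 // => qt_small.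
have : q ^+ t * (K + 1) < e by rewrite -ltr_pdivlMr // ltr_wpDl.
have := exprn_ge0 t q_ge0; nra.
Qed.

Lemma eventually_of_descent (V : nat -> R) (P : nat -> Prop) T delta :
  0 < delta -> (forall t, 0 <= V t) ->
  (forall t, (T <= t)%N -> V t.+1 <= V t) ->
  (forall t, (T <= t)%N -> ~ P t -> V t.+2 <= V t - delta) ->
  exists t0, forall t, (t0 <= t)%N -> P t.
Proof.
move=> delta_gt0 V_ge0 V_step V_drop.
have V_mono s t : (T <= s)%N -> (s <= t)%N -> V t <= V s.
  move=> Ts /subnKC <-; elim: (t - s)%N => [|k IH]; first by rewrite addn0.
  by rewrite addnS; apply: le_trans IH; apply: V_step; rewrite (leq_trans Ts) ?leq_addr.
apply: contrapT => never.
have often t0 : exists2 t, (t0 <= t)%N & ~ P t.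
  apply: contrapT => rarely; apply: never; exists t0 => t t0t.
  by apply: contrapT => nP; apply: rarely; exists t.
have decay (k : nat) : exists2 t, (T <= t)%N & V t <= V T - k%:R * delta.
  elim: k => [|k [t Tt Vt]]; first by exists T; rewrite ?mul0r ?subr0.
  have [t' tt' nPt'] := often t.
  have Tt' := leq_trans Tt tt'.
  exists t'.+2; first by rewrite (leq_trans Tt') // leqW // leqW.
  have := V_drop t' Tt' nPt'; have := V_mono t t' Tt tt'.
  rewrite -natr1 mulrDl mul1r; lra.
have [t _ Vt] := decay (Num.bound (V T / delta)).
have := archi_boundP (divr_ge0 (V_ge0 T) (ltW delta_gt0)).
rewrite ltr_pdivrMr //; have := V_ge0 t; lra.
Qed.

Lemma limn_einf_gt0P (u : nat -> \bar R) : (forall t, u t \is a fin_num) ->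
  (0 < limn_einf u)%E <->
  exists2 c : R, 0 < c & exists N, forall t, (N <= t)%N -> (c%:E <= u t)%E.
Proof.
move=> u_fin.
have -> : limn_einf u = ereal_sup (range (einfs u)).
  by rewrite limn_einf_lim; apply: cvg_lim => //; apply: cvg_einfs_sup.
split.
  move=> /ereal_sup_gt [_ [N _ <-]].
  have lb t : (N <= t)%N -> (einfs u N <= u t)%E.
    by move=> Nt; apply: ereal_inf_lbound; exists t.
  case E : (einfs u N) lb => [r| |] lb r_gt0.
  - by exists r; [rewrite -lte_fin | exists N].
  - by have := lb N (leqnn N); have := u_fin N; case: (u N).
  - by [].
move=> [c c_gt0 [N lb]].
apply: (@lt_le_trans _ _ c%:E); first by rewrite lte_fin.
apply: (@le_trans _ _ (einfs u N)); last by apply: ereal_sup_ubound; exists N.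
by apply: le_ereal_inf_tmp => _ [k /= Nk <-]; apply: lb.
Qed.

Lemma mx_norm_entry_le m p (M : 'M[R]_(m, p)) i j : `|M i j| <= `|M|.
Proof.
rewrite [X in _ <= X]/Num.Def.normr /= mx_normrE.
exact: (@le_bigmax _ _ _ 0 (fun ij : 'I_m * 'I_p => `|M ij.1 ij.2|) (i, j)).
Qed.

Lemma mx_norm_le_entries m p (M : 'M[R]_(m, p)) b : 0 <= b ->
  (forall i j, `|M i j| <= b) -> `|M| <= b.
Proof.
move=> b_ge0 M_le; rewrite [X in X <= _]/Num.Def.normr /= mx_normrE.
by apply: bigmax_le => // [[i j]] _; apply: M_le.
Qed.

Lemma cvg_mx_entriesP m p (u : nat -> 'M[R]_(m, p)) (L : 'M[R]_(m, p)) :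
  u @ \oo --> L <->
  forall e, 0 < e -> exists N, forall t, (N <= t)%N -> forall i j, `|L i j - u t i j| <= e.
Proof.
split=> [/cvgrPdist_le cvg_u e e_gt0 | cvg_u].
  have [N _ HN] := cvg_u e e_gt0; exists N => t /HN Lu i j.
  by apply: le_trans Lu; have := mx_norm_entry_le (L - u t) i j; rewrite !mxE.
apply/cvgrPdist_le => e e_gt0; have [N HN] := cvg_u e e_gt0.
exists N => // t /HN Lu; apply: mx_norm_le_entries (ltW e_gt0) _ => i j.
by rewrite !mxE.
Qed.

End RealAnalysis.

Section InfluenceModel.
Variables (R : realType) (n : nat).
Implicit Types (X A B : 'M[R]_n) (s : 'I_n -> R).

Definition abs_rowsum X i := \sum_k `|X i k|.

Lemma abs_rowsum_ge X i k : `|X i k| <= abs_rowsum X i.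
Proof. by rewrite /abs_rowsum (bigD1 k) //= lerDl sumr_ge0. Qed.

Lemma abs_rowsum_gt0 X i : 0 < X i i -> 0 < abs_rowsum X i.
Proof.
by move=> Xii; apply: lt_le_trans (abs_rowsum_ge X i i); rewrite normr_gt0 gt_eqF.
Qed.

Lemma f_IbME X : (forall i, abs_rowsum X i != 0) ->
  forall i j, f_IbM X i j = (\sum_k X i k * X k j) / abs_rowsum X i.
Proof.
move=> d_neq0 i j; rewrite /f_IbM invmx_diag; last exact: d_neq0.
by rewrite mul_diag_mx !mxE mulrC.
Qed.

Definition scaled_sym X : Prop :=
  (forall i, 0 < X i i) /\
  exists2 g : 'I_n -> R, (forall i, 0 < g i) & forall i j, g i * X i j = g j * X j i.

Lemma rs_symm_pos_scaled_sym X : rs_symm_pos X -> scaled_sym X.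
Proof.
case=> _ X_diag [g [g_gt0 gX_sym]]; split => //; exists g => // i j.
by have := congr1 (fun M : 'M[R]_n => M i j) gX_sym; rewrite !mul_diag_mx !mxE.
Qed.

Lemma scaled_sym_sg X : scaled_sym X -> forall i j, Num.sg (X j i) = Num.sg (X i j).
Proof.
case=> _ [g g_gt0 gX] i j; have := congr1 Num.sg (gX i j).
by rewrite !sgrM (gtr0_sg (g_gt0 i)) (gtr0_sg (g_gt0 j)) !mul1r => ->.
Qed.

Lemma scaled_sym_f_IbM X : scaled_sym X -> scaled_sym (f_IbM X).
Proof.
case=> X_diag [g g_gt0 gX].
have d_gt0 i : 0 < abs_rowsum X i by exact: abs_rowsum_gt0.
have d_neq0 i : abs_rowsum X i != 0 by rewrite gt_eqF.
have XX_ge0 i k : 0 <= X i k * X k i.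
  rewrite -(pmulr_rge0 _ (g_gt0 k)) mulrCA -(gX i k) mulrCA.
  by apply: mulr_ge0; [exact: ltW | rewrite -expr2 sqr_ge0].
split=> [i|].
  rewrite f_IbME // divr_gt0 // (bigD1 i) //= ltr_pwDl ?sumr_ge0 //.
  by rewrite mulr_gt0.
exists (fun i => g i * abs_rowsum X i) => [i|i j]; first by rewrite mulr_gt0.
rewrite !f_IbME // -!mulrA ![abs_rowsum X _ * _]mulrC !divfK // !mulr_sumr.
apply: eq_bigr => k _; rewrite mulrA (gX i k) -mulrA mulrCA (gX k j) mulrCA.
by rewrite [X k i * _]mulrC.
Qed.

Lemma scaled_sym_traj X0 t : scaled_sym X0 -> scaled_sym (traj X0 t).
Proof. by move=> X0_sym; elim: t => [|t IH] //; exact: scaled_sym_f_IbM IH. Qed.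

Definition positive_mx A := forall i j, 0 < A i j.

Definition sign_vec s := forall i, s i * s i = 1.

Definition sign_conj s A : 'M[R]_n := \matrix_(i, j) (s i * s j * A i j).

Definition avg_step A : 'M[R]_n :=
  \matrix_(i, j) ((\sum_k A i k * A k j) / \sum_k A i k).

Lemma sign_conjK s : sign_vec s -> involutive (sign_conj s).
Proof.
move=> s_sign A; apply/matrixP => i j; rewrite !mxE.
have -> : s i * s j * (s i * s j * A i j) = (s i * s i) * (s j * s j) * A i j by ring.
by rewrite !s_sign !mul1r.
Qed.

Lemma sign_conj_dist s A B i j : sign_vec s ->
  `|sign_conj s A i j - sign_conj s B i j| = `|A i j - B i j|.
Proof.
move=> s_sign; rewrite !mxE -mulrBr !normrM.
by rewrite (normr_sq1 (s_sign i)) (normr_sq1 (s_sign j)) !mul1r.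
Qed.

Lemma rowsum_gt0 A i : positive_mx A -> 0 < \sum_k A i k.
Proof. by move=> A_pos; apply: (psumr_gt0 (i := i)) => // k; exact: ltW. Qed.

Lemma f_IbM_sign_conj s A : sign_vec s -> positive_mx A ->
  f_IbM (sign_conj s A) = sign_conj s (avg_step A).
Proof.
move=> s_sign A_pos.
have d_eq i : abs_rowsum (sign_conj s A) i = \sum_k A i k.
  apply: eq_bigr => k _; rewrite mxE !normrM.
  rewrite (normr_sq1 (s_sign i)) (normr_sq1 (s_sign k)) !mul1r.
  by rewrite gtr0_norm.
have d_neq0 i : abs_rowsum (sign_conj s A) i != 0 by rewrite d_eq gt_eqF ?rowsum_gt0.
apply/matrixP => i j; rewrite f_IbME // d_eq !mxE mulrA; congr (_ / _).
rewrite mulr_sumr; apply: eq_bigr => k _; rewrite !mxE.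
have -> : s i * s k * A i k * (s k * s j * A k j) =
          s i * s j * (A i k * A k j) * (s k * s k) by ring.
by rewrite s_sign mulr1.
Qed.

Lemma positive_avg_step A : positive_mx A -> positive_mx (avg_step A).
Proof.
move=> A_pos i j; rewrite mxE divr_gt0 ?rowsum_gt0 //.
by apply: (psumr_gt0 (i := i)) => [k|]; rewrite ?mulr_ge0 ?mulr_gt0 ?ltW.
Qed.

Lemma positive_iter_avg_step A t : positive_mx A -> positive_mx (iter t avg_step A).
Proof. by move=> A_pos; elim: t => [|t IH] //; exact: positive_avg_step IH. Qed.

Lemma iter_f_IbM_sign_conj s A t : sign_vec s -> positive_mx A ->
  iter t (@f_IbM R n) (sign_conj s A) = sign_conj s (iter t avg_step A).
Proof.
move=> s_sign A_pos; elim: t => [|t IH] //=.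
by rewrite IH f_IbM_sign_conj //; exact: positive_iter_avg_step.
Qed.

Lemma avg_step_bounds A j lo hi : positive_mx A ->
  (forall k, lo <= A k j <= hi) -> forall i, lo <= avg_step A i j <= hi.
Proof.
move=> A_pos A_in i; rewrite mxE.
by apply: wavg_bounds => // [k|]; rewrite ?rowsum_gt0 ?ltW.
Qed.

Lemma iter_avg_step_bounds A j lo hi t : positive_mx A ->
  (forall k, lo <= A k j <= hi) -> forall i, lo <= iter t avg_step A i j <= hi.
Proof.
move=> A_pos A_in; elim: t => [|t IH] //=.
exact: avg_step_bounds (positive_iter_avg_step t A_pos) IH.
Qed.

(* Both rows put weight at least [eta] on the same entry [A i j] of column [j]. *)
Lemma avg_step_spread A j eta lo hi : positive_mx A ->
  (forall i k, eta <= A i k / \sum_l A i l) -> (forall k, lo <= A k j <= hi) ->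
  forall i i', avg_step A i j - avg_step A i' j <= (1 - eta) * (hi - lo).
Proof.
move=> A_pos eta_le A_in i i'; rewrite !mxE.
have w_ge0 l k : 0 <= A l k by exact: ltW.
have := @wavg_le_sub _ _ (A i) (A^~ j) (w_ge0 i) (rowsum_gt0 i A_pos) hi i
  (fun k => (andP (A_in k)).2).
have := @wavg_ge_add _ _ (A i') (A^~ j) (w_ge0 i') (rowsum_gt0 i' A_pos) lo i
  (fun k => (andP (A_in k)).1).
have := eta_le i i; have := eta_le i' i; have /andP[lo_le le_hi] := A_in i.
set a := A i i / _; set b := A i' i / _; set x := A i j.
move=> eta_b eta_a avg_ge avg_le.
have : eta * (hi - x) <= a * (hi - x) by rewrite ler_wpM2r // subr_ge0.
have : eta * (x - lo) <= b * (x - lo) by rewrite ler_wpM2r // subr_ge0.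
lra.
Qed.

End InfluenceModel.

Section Consensus.
Variables (R : realType) (n : nat) (i0 : 'I_n).
Implicit Types (A : 'M[R]_n).

Definition colmin A j := A (Order.arg_min i0 xpredT (A^~ j)) j.
Definition colmax A j := A (Order.arg_max i0 xpredT (A^~ j)) j.

Lemma colmin_le A i j : colmin A j <= A i j.
Proof. by rewrite /colmin; case: arg_minP => // k _; apply. Qed.

Lemma le_colmax A i j : A i j <= colmax A j.
Proof. by rewrite /colmax; case: arg_maxP => // k _; apply. Qed.

Lemma le_colmin A j c : (forall i, c <= A i j) -> c <= colmin A j.
Proof. by move=> c_le; apply: c_le. Qed.

Lemma colmax_le A j c : (forall i, A i j <= c) -> colmax A j <= c.
Proof. by move=> le_c; apply: le_c. Qed.

Lemma avg_step_col_range A j : positive_mx A ->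
  colmin A j <= colmin (avg_step A) j /\ colmax (avg_step A) j <= colmax A j.
Proof.
move=> A_pos; have A_in k : colmin A j <= A k j <= colmax A j.
  by rewrite colmin_le le_colmax.
have in_range := avg_step_bounds A_pos A_in.
by split; [apply: le_colmin | apply: colmax_le] => i; case/andP: (in_range i).
Qed.

Lemma avg_step_col_contract A j eta : positive_mx A ->
  (forall i k, eta <= A i k / \sum_l A i l) ->
  colmax (avg_step A) j - colmin (avg_step A) j <= (1 - eta) * (colmax A j - colmin A j).
Proof.
move=> A_pos eta_le; apply: avg_step_spread => // k.
by rewrite colmin_le le_colmax.
Qed.

Lemma positive_mx_bounds A : positive_mx A ->
  exists mu Mx, 0 < mu /\ forall i j, mu <= A i j <= Mx.
Proof.
move=> A_pos; pose F (p : 'I_n * 'I_n) := A p.1 p.2.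
case: (@Order.TotalTheory.arg_minP _ R _ (i0, i0) xpredT F isT) => p _ p_min.
case: (@Order.TotalTheory.arg_maxP _ R _ (i0, i0) xpredT F isT) => q _ q_max.
exists (F p), (F q); split=> [|i j]; first exact: A_pos.
by apply/andP; split; [exact: (p_min (i, j)) | exact: (q_max (i, j))].
Qed.

Lemma avg_weight_lb A mu Mx : (forall i j, mu <= A i j <= Mx) -> 0 < mu ->
  forall i k, mu / (n%:R * Mx) <= A i k / \sum_l A i l.
Proof.
move=> A_in mu_gt0 i k.
have A_pos : positive_mx A by move=> a b; case/andP: (A_in a b) => /(lt_le_trans mu_gt0).
have Mx_gt0 : 0 < Mx by case/andP: (A_in i k) => le1 le2; apply: lt_le_trans le2.
have S_le : \sum_l A i l <= n%:R * Mx.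
  have -> : n%:R * Mx = \sum_(l < n) Mx by rewrite sumr_const card_ord mulr_natl.
  by apply: ler_sum => l _; case/andP: (A_in i l).
rewrite ler_pdivrMr ?mulr_gt0 ?ltr0n ?(leq_ltn_trans (leq0n i0)) //.
rewrite mulrAC ler_pdivlMr ?rowsum_gt0 //.
case/andP: (A_in i k) => mu_le _.
by apply: ler_pM => //; rewrite ltW ?rowsum_gt0.
Qed.

Lemma iter_avg_step_col_gap A0 : positive_mx A0 ->
  exists2 q, 0 <= q < 1 & exists2 K, 0 <= K & forall t j,
    colmax (iter t (@avg_step R n) A0) j - colmin (iter t (@avg_step R n) A0) j <= q ^+ t * K.
Proof.
move=> A0_pos; pose A t := iter t (@avg_step R n) A0.
have A_pos t : positive_mx (A t) by exact: positive_iter_avg_step.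
have [mu [Mx [mu_gt0 A0_in]]] := positive_mx_bounds A0_pos.
have A_in t i j : mu <= A t i j <= Mx by apply: iter_avg_step_bounds.
pose eta := mu / (n%:R * Mx).
have eta_le t i k : eta <= A t i k / \sum_l A t i l by exact: avg_weight_lb.
have Mx_gt0 : 0 < Mx.
  by have /andP[mu_le le_Mx] := A0_in i0 i0; apply: lt_le_trans mu_gt0 (le_trans mu_le le_Mx).
have eta_gt0 : 0 < eta by rewrite divr_gt0 // mulr_gt0 // ltr0n (leq_ltn_trans (leq0n i0)).
have eta_le1 : eta <= 1.
  apply: le_trans (eta_le 0%N i0 i0) _; rewrite ler_pdivrMr ?rowsum_gt0 // mul1r.
  by rewrite (bigD1 i0) //= lerDl sumr_ge0 // => k _; rewrite ltW.
exists (1 - eta); first by rewrite subr_ge0 eta_le1 ltrBlDr ltrDl.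
exists (Mx - mu) => [|t j]; first by rewrite subr_ge0; case/andP: (A0_in i0 i0); apply: le_trans.
elim: t => [|t IH].
  rewrite expr0 mul1r lerB ?le_colmin ?colmax_le // => i; by case/andP: (A0_in i j).
apply: le_trans (avg_step_col_contract j (A_pos t) (eta_le t)) _.
by rewrite exprS -mulrA ler_wpM2l // subr_ge0.
Qed.

Lemma iter_avg_step_consensus A0 : positive_mx A0 ->
  exists2 v : 'I_n -> R, (forall j, 0 < v j) &
    forall e, 0 < e -> exists N, forall t, (N <= t)%N ->
      forall i j, `|v j - iter t (@avg_step R n) A0 i j| <= e.
Proof.
move=> A0_pos; pose A t := iter t (@avg_step R n) A0.
have A_pos t : positive_mx (A t) by exact: positive_iter_avg_step.
have [q q_in [K K_ge0 gap]] := iter_avg_step_col_gap A0_pos.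
pose lo j t := colmin (A t) j; pose hi j t := colmax (A t) j.
have lo_nd j : nondecreasing_seq (lo j).
  by apply/nondecreasing_seqP => t; exact: (avg_step_col_range j (A_pos t)).1.
have hi_ni j : nonincreasing_seq (hi j).
  by apply/nonincreasing_seqP => t; exact: (avg_step_col_range j (A_pos t)).2.
have lo_hi j t : lo j t <= hi j t by apply: le_trans (colmin_le _ i0 j) (le_colmax _ i0 j).
pose v j := sup (range (lo j)).
have v_in j t := sup_nested_intervals (lo_nd j) (hi_ni j) (lo_hi j) t.
exists v => [j|e e_gt0].
  by case/andP: (v_in j 0%N) => + _; apply: lt_le_trans; exact: A0_pos.
have [N HN] := geometric_le_eventually q_in K_ge0 e_gt0.
exists N => t /HN small i j; apply: le_trans small.
have := gap t j; have := v_in j t; have := colmin_le (A t) i j; have := le_colmax (A t) i j.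
rewrite /v /lo /hi -/(A t) ler_norml => le_max min_le /andP[lo_v v_hi] spread.
apply/andP; split; lra.
Qed.

End Consensus.

Lemma mxrank1_minor (F : fieldType) m p (M : 'M[F]_(m, p)) i j k l :
  \rank M = 1%N -> M i k * M j l = M i l * M j k.
Proof.
move=> rk1; rewrite -(mulmx_base M); move: (col_base M) (row_base M); rewrite rk1.
by move=> C D; rewrite !mxE !big_ord1; ring.
Qed.

Section SignedOuterProduct.
Variables (R : realType) (n : nat).
Implicit Types (X Y : 'M[R]_n) (w : 'I_n -> R).

Definition sg_outer w : 'M[R]_n := \matrix_(i, j) (Num.sg (w i) * w j).

Definition abs_rows w : 'M[R]_n := \matrix_(i, j) `|w j|.

Lemma sg_outer_sign_conj w : sg_outer w = sign_conj (fun i => Num.sg (w i)) (abs_rows w).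
Proof. by apply/matrixP => i j; rewrite !mxE -mulrA -numEsg. Qed.

Lemma sign_vec_sg w : (forall i, w i != 0) -> sign_vec (fun i => Num.sg (w i)).
Proof. by move=> w_neq0 i; exact: sg_sq. Qed.

Lemma positive_abs_rows w : (forall i, w i != 0) -> positive_mx (abs_rows w).
Proof. by move=> w_neq0 i j; rewrite mxE normr_gt0. Qed.

Lemma Q_IbM_sg_outer w : (forall j, w j != 0) -> Q_IbM (sg_outer w).
Proof.
move=> w_neq0; split; first split.
- by apply/matrixP => i j; rewrite /sgmx !mxE !sgrM !sgr_id mulrC.
- by move=> i; rewrite mxE -normrEsg normr_gt0.
- exists (fun i => `|w i|); split=> [i|]; first by rewrite normr_gt0.
  apply/matrixP => i j; rewrite !mul_diag_mx !mxE !mulrA.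
  by rewrite ![`|_| * Num.sg _]mulrC -!numEsg mulrC.
exists 1%g, (sg_outer w); split; last by rewrite perm_mx1 trmx1 mul1mx mulmx1.
by exists (fun=> 0%N), w; split=> //; split=> // i j; rewrite mxE.
Qed.

Lemma rank_sg_outer w (i0 : 'I_n) : (forall j, w j != 0) -> \rank (sg_outer w) = 1%N.
Proof.
move=> w_neq0.
have -> : sg_outer w = (\col_i Num.sg (w i)) *m (\row_j w j).
  by apply/matrixP => i j; rewrite !mxE big_ord1 !mxE.
apply/eqP; rewrite eqn_leq (leq_trans (mxrankM_maxl _ _) (rank_leq_col _)) /=.
rewrite lt0n mxrank_eq0; apply/negP => /eqP/matrixP/(_ i0 i0)/eqP.
by rewrite !mxE big_ord1 !mxE -normrEsg normr_eq0 (negbTE (w_neq0 _)).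
Qed.

(* In a rank-one matrix every 2x2 minor vanishes, so two indices in different
   diagonal blocks would give [X i i * X j j = 0]: there is only one block. *)
Lemma Q_IbM_rank1 X : Q_IbM X -> \rank X = 1%N ->
  exists2 w, (forall j, w j != 0) & X = sg_outer w.
Proof.
move=> [_ [s [Y [[b [w [_ [w_neq0 YE]]]] XE]]]] rk1.
have XsE i j : X i j = Y (s i) (s j).
  by rewrite XE tr_perm_mx -col_permE -row_permE !mxE.
exists (fun i => w (s i)) => [j|]; first exact: w_neq0.
apply/matrixP => i j; rewrite mxE XsE YE.
case: eqP => // b_neq; exfalso.
have := mxrank1_minor i j i j rk1; rewrite !XsE !YE !eqxx.
rewrite (introF eqP b_neq) (introF eqP (nesym b_neq)) mul0r -!normrEsg.
by move/eqP; rewrite mulf_eq0 !normr_eq0 !(negbTE (w_neq0 _)).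
Qed.

Lemma f_IbM_sg_outer w : (forall j, w j != 0) -> f_IbM (sg_outer w) = sg_outer w.
Proof.
move=> w_neq0; have s_sign := sign_vec_sg w_neq0; have C_pos := positive_abs_rows w_neq0.
rewrite sg_outer_sign_conj f_IbM_sign_conj //.
congr sign_conj; apply/matrixP => i j; rewrite !mxE.
under eq_bigr do rewrite !mxE.
under [X in _ / X]eq_bigr do rewrite mxE.
rewrite -mulr_suml mulrAC divff ?mul1r // gt_eqF //.
by apply: (psumr_gt0 (i := i)) => [k|]; rewrite ?normr_gt0.
Qed.

Lemma maxdist_ge X Y i j : `|X i j - Y i j| <= maxdist X Y.
Proof.
apply: le_trans (le_bigmax _ _ i).
exact: (le_bigmax _ (fun j => `|X i j - Y i j|) j).
Qed.

Lemma maxdist_lt X Y e : 0 < e -> (forall i j, `|X i j - Y i j| < e) -> maxdist X Y < e.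
Proof. by move=> e_gt0 XY_lt; apply: bigmax_lt => // i _; apply: bigmax_lt. Qed.

(* A perturbation smaller than [min_j |w j|] keeps the sign pattern, and the
   averaging dynamics of its positive part keeps every column in its initial
   interval. *)
Lemma sg_outer_locally_stable w (i0 : 'I_n) : (forall j, w j != 0) ->
  locally_stable (@f_IbM R n) (sg_outer w).
Proof.
move=> w_neq0 eps eps_gt0; pose s i := Num.sg (w i).
have s_sign : sign_vec s by exact: sign_vec_sg.
case: (@Order.TotalTheory.arg_minP _ R _ i0 xpredT (fun j => `|w j|) isT) => k0 _ k0_min.
have mu_gt0 : 0 < `|w k0| by rewrite normr_gt0.
exists (Num.min eps `|w k0|); split=> [|X0]; first by rewrite lt_min eps_gt0 mu_gt0.
set e := maxdist X0 _ => e_lt; rewrite lt_min in e_lt; case/andP: e_lt => e_lt_eps e_lt_mu.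
have [A0 X0E] : exists A0, X0 = sign_conj s A0.
  by exists (sign_conj s X0); rewrite sign_conjK.
have col_in i j : `|w j| - e <= A0 i j <= `|w j| + e.
  have := maxdist_ge X0 (sg_outer w) i j.
  rewrite -/e {1}X0E sg_outer_sign_conj sign_conj_dist // mxE ler_norml.
  by case/andP => ? ?; apply/andP; split; lra.
have A0_pos : positive_mx A0.
  by move=> i j; have := k0_min j isT; case/andP: (col_in i j) => ? ? ?; lra.
move=> t; rewrite X0E iter_f_IbM_sign_conj // sg_outer_sign_conj.
apply: maxdist_lt => // i j; rewrite sign_conj_dist // mxE.
have /andP[? ?] := iter_avg_step_bounds t A0_pos (col_in^~ j) i.
by rewrite ltr_norml; apply/andP; split; lra.
Qed.

End SignedOuterProduct.

Section Dynamics.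
Variables (R : realType) (n : nat).
Implicit Types (X Y : 'M[R]_n) (s w : 'I_n -> R).

Lemma sign_vec_sg_id s : sign_vec s -> forall i, Num.sg (s i) = s i.
Proof.
move=> s_sign i; have /eqP := s_sign i; rewrite -expr2 sqrf_eq1.
by case/orP => /eqP ->; rewrite ?sgr1 ?sgrN1.
Qed.

Lemma social_balance_neq0 Y : social_balance Y -> forall i j, Y i j != 0.
Proof.
case=> _ tri i j; apply/negP => /eqP Y0; have := tri i j j.
by rewrite Y0 sgr0 !mul0r => /eqP; rewrite eq_sym oner_eq0.
Qed.

Lemma social_balance_sign_conj (i0 : 'I_n) Y : social_balance Y ->
  exists2 s, sign_vec s & Y = sign_conj s (\matrix_(i, j) `|Y i j|).
Proof.
move=> Y_bal; have Y_neq0 := social_balance_neq0 Y_bal; case: Y_bal => Y_diag tri.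
pose s i := Num.sg (Y i0 i).
have s_sign : sign_vec s by move=> i; exact: sg_sq.
have sg_back j : Num.sg (Y j i0) = s j.
  have := tri i0 j i0; rewrite (gtr0_sg (Y_diag i0)) mulr1 => sjY.
  by rewrite -[LHS]mul1r -(s_sign j) -mulrA sjY mulr1.
exists s => //; apply/matrixP => i j; rewrite !mxE.
have sgY : Num.sg (Y i j) = s i * s j.
  have := congr1 ( *%R^~ (s i * s j)) (tri i0 i j).
  rewrite sg_back mul1r => <-; rewrite -/(s i).
  transitivity (Num.sg (Y i j) * (s i * s i) * (s j * s j)); last by ring.
  by rewrite !s_sign !mulr1.
by rewrite -sgY -numEsg.
Qed.

Lemma balanced_traj_cvg (i0 : 'I_n) X0 t0 : social_balance (traj X0 t0) ->
  exists2 w, (forall j, w j != 0) & traj X0 @ \oo --> sg_outer w.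
Proof.
move=> bal; have Y_neq0 := social_balance_neq0 bal.
have [s s_sign YE] := social_balance_sign_conj i0 bal.
set Y := traj X0 t0 in Y_neq0 YE; set A := \matrix_(i, j) _ in YE.
have A_pos : positive_mx A by move=> i j; rewrite mxE normr_gt0.
have [v v_gt0 cvg_v] := iter_avg_step_consensus i0 A_pos.
have s_neq0 j : s j != 0.
  by apply/eqP => s0; have /eqP := s_sign j; rewrite s0 mul0r eq_sym oner_eq0.
exists (fun j => s j * v j) => [j|]; first by rewrite mulf_neq0 // gt_eqF.
have -> : sg_outer (fun j => s j * v j) = sign_conj s (\matrix_(i, j) v j).
  apply/matrixP => i j; rewrite !mxE sgrM sign_vec_sg_id // gtr0_sg // mulr1.
  by rewrite mulrA.
apply/cvg_mx_entriesP => e e_gt0; have [N near] := cvg_v e e_gt0.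
exists (N + t0)%N => t le_t i j.
have t0_le : (t0 <= t)%N by rewrite (leq_trans (leq_addl N t0) le_t).
have -> : traj X0 t = iter (t - t0) (@f_IbM R n) Y by rewrite /Y /traj -iterD subnK.
rewrite YE iter_f_IbM_sign_conj // sign_conj_dist // mxE.
by apply: near; rewrite leq_subRL // addnC.
Qed.

Definition bounded_away_from0 (X : nat -> 'M[R]_n) : Prop :=
  exists2 c : R, 0 < c & exists N, forall t, (N <= t)%N -> forall i j, c <= `|X t i j|.

Lemma nonvanishing_appraisalP (i0 : 'I_n) (X : nat -> 'M[R]_n) :
  nonvanishing_appraisal X <-> bounded_away_from0 X.
Proof.
have minabs_le Y i j : (minabs Y <= (`|Y i j|)%:E)%E.
  apply: le_trans (bigmin_le _ i _) _.
  exact: (bigmin_le _ j (fun j => (`|Y i j|)%:E)).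
have minabs_ge Y c : (forall i j, c <= `|Y i j|) -> (c%:E <= minabs Y)%E.
  move=> c_le; apply: le_bigmin => [|i _]; first exact: leey.
  by apply: le_bigmin => [|j _]; [exact: leey | rewrite lee_fin].
have minabs_fin Y : minabs Y \is a fin_num.
  rewrite ge0_fin_numE ?(minabs_ge _ 0) //.
  exact: le_lt_trans (minabs_le Y i0 i0) (ltey _).
rewrite /nonvanishing_appraisal limn_einf_gt0P //; split.
  case=> c c_gt0 [N c_le]; exists c => //; exists N => t Nt i j.
  by rewrite -lee_fin; apply: le_trans (c_le t Nt) (minabs_le _ i j).
by case=> c c_gt0 [N c_le]; exists c => //; exists N => t Nt; exact: minabs_ge (c_le t Nt).
Qed.

Lemma cvg_sg_outer_bounded_away (i0 : 'I_n) (X : nat -> 'M[R]_n) w :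
  (forall j, w j != 0) -> X @ \oo --> sg_outer w -> bounded_away_from0 X.
Proof.
move=> w_neq0 /cvg_mx_entriesP cvgX.
case: (@Order.TotalTheory.arg_minP _ R _ i0 xpredT (fun j => `|w j|) isT) => k0 _ k0_min.
have mu_gt0 : 0 < `|w k0| / 2 by rewrite divr_gt0 ?normr_gt0.
have [N near] := cvgX _ mu_gt0.
exists (`|w k0| / 2) => //; exists N => t Nt i j.
have := near t Nt i j; have := k0_min j isT.
have := ler_normD (sg_outer w i j - X t i j) (X t i j); rewrite subrK.
by rewrite mxE normrM normr_sg w_neq0 mul1r /=; lra.
Qed.

Lemma f_IbM_entry_bound X M : (forall i, 0 < abs_rowsum X i) ->
  (forall i j, `|X i j| <= M) -> forall i j, `|f_IbM X i j| <= M.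
Proof.
move=> d_gt0 X_le i j; rewrite f_IbME => [|k]; last by rewrite gt_eqF.
rewrite normrM normfV (gtr0_norm (d_gt0 i)) ler_pdivrMr //.
apply: le_trans (ler_norm_sum _ _ _) _; rewrite /abs_rowsum mulr_sumr.
by apply: ler_sum => k _; rewrite normrM mulrC ler_wpM2r.
Qed.

Lemma abs_rowsum_f_IbM_mul X i : (forall i, 0 < abs_rowsum X i) ->
  abs_rowsum (f_IbM X) i * abs_rowsum X i = \sum_j `|\sum_k X i k * X k j|.
Proof.
move=> d_gt0; have d_neq0 k : abs_rowsum X k != 0 by rewrite gt_eqF.
rewrite [abs_rowsum (f_IbM X) i]/abs_rowsum mulr_suml; apply: eq_bigr => j _.
by rewrite f_IbME // normrM normfV (gtr0_norm (d_gt0 i)) mulfVK.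
Qed.

Lemma sum_abs_rowsum X i :
  \sum_k `|X i k| * abs_rowsum X k = \sum_j \sum_k `|X i k * X k j|.
Proof.
rewrite exchange_big /=; apply: eq_bigr => k _; rewrite /abs_rowsum mulr_sumr.
by apply: eq_bigr => j _; rewrite normrM.
Qed.

Lemma abs_rowsum_f_IbM_le X i : (forall i, 0 < abs_rowsum X i) ->
  abs_rowsum (f_IbM X) i * abs_rowsum X i <= \sum_k `|X i k| * abs_rowsum X k.
Proof.
move=> d_gt0; rewrite abs_rowsum_f_IbM_mul // sum_abs_rowsum.
by apply: ler_sum => j _; exact: ler_norm_sum.
Qed.

Lemma abs_rowsum_f_IbM_cancel X i j a b m : (forall i, 0 < abs_rowsum X i) -> a != b ->
  (X i a * X a j) * (X i b * X b j) <= 0 ->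
  m <= `|X i a * X a j| -> m <= `|X i b * X b j| ->
  abs_rowsum (f_IbM X) i * abs_rowsum X i + 2 * m <= \sum_k `|X i k| * abs_rowsum X k.
Proof.
move=> d_gt0 ab cancel ma mb; rewrite abs_rowsum_f_IbM_mul // sum_abs_rowsum.
rewrite (bigD1 j) //= [X in _ <= X](bigD1 j) //= addrAC lerD //.
  exact: (ler_norm_sum_cancel (u := fun k => X i k * X k j)) ab cancel ma mb.
by apply: ler_sum => k _; exact: ler_norm_sum.
Qed.

Lemma abs_rowsum_f_IbM_contract X dm eta : (forall i, 0 < abs_rowsum X i) ->
  (forall k, abs_rowsum X k <= dm) -> (forall i k, eta * abs_rowsum X i <= `|X i k|) ->
  forall i l, abs_rowsum (f_IbM X) i <= dm - eta * (dm - abs_rowsum X l).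
Proof.
move=> d_gt0 d_le eta_le i l.
have := abs_rowsum_f_IbM_le i d_gt0.
have -> : \sum_k `|X i k| * abs_rowsum X k =
          abs_rowsum X i * dm - \sum_k `|X i k| * (dm - abs_rowsum X k).
  by rewrite [abs_rowsum X i]/abs_rowsum mulr_suml -sumrB; apply: eq_bigr => k _; ring.
have : `|X i l| * (dm - abs_rowsum X l) <= \sum_k `|X i k| * (dm - abs_rowsum X k).
  by rewrite (bigD1 l) //= lerDl sumr_ge0 // => k _; rewrite mulr_ge0 ?subr_ge0.
have : eta * abs_rowsum X i * (dm - abs_rowsum X l) <= `|X i l| * (dm - abs_rowsum X l).
  by rewrite ler_wpM2r ?subr_ge0.
move=> eta_l l_sum le_sum; rewrite -(ler_pM2r (d_gt0 i)); lra.
Qed.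

(* The two products are the terms [a = i] and [a = j] of [(X X) i k]. *)
Lemma unbalanced_triangle X : scaled_sym X -> (forall i j, X i j != 0) ->
  ~ social_balance X -> exists i j k, i != j /\ (X i i * X i k) * (X i j * X j k) <= 0.
Proof.
move=> X_sym X_neq0 unbal; have sgs := scaled_sym_sg X_sym; case: X_sym => X_diag _.
have [i [j [k sg_neq1]]] :
    exists i j k, Num.sg (X i j) * Num.sg (X j k) * Num.sg (X k i) != 1.
  apply: contrapT => balanced; apply: unbal; split=> // i j k; apply/eqP.
  by apply: contrapT => neq1; apply: balanced; exists i, j, k; exact/negP.
exists i, j, k; split.
  apply/eqP => ij; move: sg_neq1; rewrite -ij gtr0_sg // mul1r sgs sg_sq //.
  by rewrite eqxx.
rewrite leNgt; apply/negP => prod_gt0; move/eqP: sg_neq1; apply.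
have := gtr0_sg prod_gt0; rewrite !sgrM (gtr0_sg (X_diag i)) mul1r -(sgs i k) => <-.
ring.
Qed.

Lemma abs_rowsum_f_IbM_drop X dm M c : scaled_sym X ->
  (forall k, abs_rowsum X k <= dm) -> (forall k, abs_rowsum X k <= M) ->
  0 < c -> (forall i j, c <= `|X i j|) -> ~ social_balance X ->
  exists i, abs_rowsum (f_IbM X) i <= dm - 2 * c ^+ 2 / M.
Proof.
move=> X_sym d_le d_le_M c_gt0 c_le unbal.
have d_gt0 i : 0 < abs_rowsum X i by apply: abs_rowsum_gt0; case: X_sym.
have X_neq0 i j : X i j != 0 by rewrite -normr_gt0 (lt_le_trans c_gt0).
have [i [j [k [ij cancel]]]] := unbalanced_triangle X_sym X_neq0 unbal.
have M_gt0 : 0 < M := lt_le_trans (d_gt0 i) (d_le_M i).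
have c2_le a b : c ^+ 2 <= `|X i a * X a b|.
  by rewrite expr2 normrM; apply: ler_pM; rewrite ?c_le // ltW.
have := abs_rowsum_f_IbM_cancel d_gt0 ij cancel (c2_le _ _) (c2_le _ _).
have : \sum_l `|X i l| * abs_rowsum X l <= abs_rowsum X i * dm.
  rewrite [abs_rowsum X i]/abs_rowsum mulr_suml; apply: ler_sum => l _.
  exact: ler_wpM2l.
have : 2 * c ^+ 2 / M * abs_rowsum X i <= 2 * c ^+ 2.
  rewrite mulrAC ler_pdivrMr //.
  by apply: ler_wpM2l; [rewrite mulr_ge0 ?exprn_ge0 ?ltW | exact: d_le_M].
move=> lossM sum_le cancel_le; exists i; rewrite -(ler_pM2r (d_gt0 i)) mulrBl; lra.
Qed.

Definition max_abs_rowsum X := \big[Num.max/0]_i abs_rowsum X i.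

Lemma abs_rowsum_le_max X i : abs_rowsum X i <= max_abs_rowsum X.
Proof. exact: le_bigmax. Qed.

Lemma max_abs_rowsum_attained (i0 : 'I_n) X : exists i, max_abs_rowsum X = abs_rowsum X i.
Proof.
have d_ge0 i : 0 <= abs_rowsum X i by exact: sumr_ge0.
by have [k _ Ek] := eq_bigmax i0 xpredT (abs_rowsum X) isT (fun i _ => d_ge0 i); exists k.
Qed.

Lemma traj_abs_rowsum_le X0 t i : scaled_sym X0 -> abs_rowsum (traj X0 t) i <= n%:R * `|X0|.
Proof.
move=> X0_sym.
have d_gt0 u k : 0 < abs_rowsum (traj X0 u) k.
  by apply: abs_rowsum_gt0; case: (scaled_sym_traj u X0_sym).
have entry_le u k j : `|traj X0 u k j| <= `|X0|.
  elim: u k j => [|u IH] k j; first exact: mx_norm_entry_le.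
  exact: f_IbM_entry_bound (d_gt0 u) IH k j.
have -> : n%:R * `|X0| = \sum_(k < n) `|X0| by rewrite sumr_const card_ord mulr_natl.
by apply: ler_sum => k _; exact: entry_le.
Qed.

Lemma bounded_away_social_balance (i0 : 'I_n) X0 : scaled_sym X0 ->
  bounded_away_from0 (traj X0) ->
  exists t0, forall t, (t0 <= t)%N -> social_balance (traj X0 t).
Proof.
move=> X0_sym [c c_gt0 [T c_le]].
pose X := traj X0; pose d t := abs_rowsum (X t); pose dm t := max_abs_rowsum (X t).
have X_sym t : scaled_sym (X t) by exact: scaled_sym_traj.
have d_gt0 t i : 0 < d t i by apply: abs_rowsum_gt0; case: (X_sym t).
pose M := n%:R * `|X0|.
have d_le_M t i : d t i <= M by exact: traj_abs_rowsum_le.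
have c_le_M : c <= M.
  exact: le_trans (c_le T (leqnn T) i0 i0) (le_trans (abs_rowsum_ge _ _ _) (d_le_M T i0)).
have M_gt0 : 0 < M by exact: lt_le_trans c_gt0 c_le_M.
pose eta := c / M; pose kap := 2 * c ^+ 2 / M.
have eta_gt0 : 0 < eta by rewrite divr_gt0.
have eta_le1 : eta <= 1 by rewrite ler_pdivrMr // mul1r.
have contract t : (T <= t)%N -> forall i l, d t.+1 i <= dm t - eta * (dm t - d t l).
  move=> Tt; apply: abs_rowsum_f_IbM_contract => [i|k|i k].
  - exact: d_gt0.
  - exact: abs_rowsum_le_max.
  apply: le_trans (c_le t Tt i k); rewrite /eta mulrAC ler_pdivrMr //.
  by apply: ler_wpM2l; [exact: ltW | exact: d_le_M].
have drop t : (T <= t)%N -> ~ social_balance (X t) -> exists i, d t.+1 i <= dm t - kap.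
  move=> Tt; apply: abs_rowsum_f_IbM_drop (c_le t Tt) => //.
    exact: abs_rowsum_le_max.
  exact: d_le_M.
have dm_attained t : exists i, dm t = d t i by exact: max_abs_rowsum_attained.
have dm_step t : (T <= t)%N -> dm t.+1 <= dm t.
  move=> Tt; have [i ->] := dm_attained t.+1; have [l El] := dm_attained t.
  by have := contract t Tt i l; rewrite -El subrr mulr0 subr0.
apply: (@eventually_of_descent _ dm _ T (eta * kap)) => [||t Tt|t Tt unbal].
- by rewrite mulr_gt0 // divr_gt0 // mulr_gt0 // exprn_gt0.
- by move=> t; apply: le_trans (abs_rowsum_le_max _ i0); exact: ltW (d_gt0 t i0).
- exact: dm_step.
(* [dm t.+2 <= (1 - eta) * dm t.+1 + eta * d t.+1 i <= dm t - eta * kap] *)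
have [i drop_i] := drop t Tt unbal; have [i' ->] := dm_attained t.+2.
have := contract t.+1 (leqW Tt) i' i; have := dm_step t Tt.
have : 0 <= (1 - eta) * (dm t - dm t.+1) by rewrite mulr_ge0 ?subr_ge0 ?dm_step.
have : 0 <= eta * (dm t - kap - d t.+1 i) by rewrite mulr_ge0 ?subr_ge0 // ltW.
lra.
Qed.

End Dynamics.

Theorem theorem4p6 (R : realType) (n : nat) (n_gt0 : (0 < n)%N) :
  (forall Xs : 'M[R]_n, Q_IbM Xs -> \rank Xs = 1%N ->
     f_IbM Xs = Xs /\ locally_stable (@f_IbM R n) Xs)
  /\
  (forall X0 : 'M[R]_n, rs_symm_pos X0 ->
     [/\ (nonvanishing_appraisal (traj X0) <->
          exists t0 : nat, forall t, (t0 <= t)%N -> social_balance (traj X0 t)),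
         ((exists t0 : nat, forall t, (t0 <= t)%N -> social_balance (traj X0 t)) <->
          exists Xs : 'M[R]_n, [/\ Q_IbM Xs, \rank Xs = 1%N &
                                   traj X0 @ \oo --> Xs])
       & (nonvanishing_appraisal (traj X0) <->
          exists Xs : 'M[R]_n, [/\ Q_IbM Xs, \rank Xs = 1%N &
                                   traj X0 @ \oo --> Xs])]).
Proof.
pose i0 := Ordinal n_gt0.
split=> [Xs XsQ rk1 | X0 /rs_symm_pos_scaled_sym X0_sym].
  have [w w_neq0 ->] := Q_IbM_rank1 XsQ rk1.
  by split; [exact: f_IbM_sg_outer | exact: sg_outer_locally_stable i0 w_neq0].
have ab : nonvanishing_appraisal (traj X0) ->
    exists t0, forall t, (t0 <= t)%N -> social_balance (traj X0 t).
  by move/(nonvanishing_appraisalP i0); exact: bounded_away_social_balance.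
have bc : (exists t0, forall t, (t0 <= t)%N -> social_balance (traj X0 t)) ->
    exists Xs, [/\ Q_IbM Xs, \rank Xs = 1%N & traj X0 @ \oo --> Xs].
  case=> t0 /(_ t0 (leqnn t0)) /(balanced_traj_cvg i0) [w w_neq0 cvg_w].
  by exists (sg_outer w); split; [exact: Q_IbM_sg_outer | exact: rank_sg_outer i0 w_neq0 |].
have ca : (exists Xs, [/\ Q_IbM Xs, \rank Xs = 1%N & traj X0 @ \oo --> Xs]) ->
    nonvanishing_appraisal (traj X0).
  case=> Xs [XsQ rk1]; have [w w_neq0 ->] := Q_IbM_rank1 XsQ rk1.
  by move/(cvg_sg_outer_bounded_away i0 w_neq0)/(nonvanishing_appraisalP i0).
split; split=> h; [exact: ab | exact: ca (bc h) | exact: bc | exact: ab (ca h)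
                  | exact: bc (ab h) | exact: ca].
Qed.
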